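(* Let $v>3$ and let $(X,\mathcal{B})$ be a partial STS$(v)$ with $X=\{1,\dots,v\}$. Then there is a sequencing $\pi=[x_1\,x_2\,\cdots\,x_v]$ of $X$ that is $3$-good for $(X,\mathcal{B})$, i.e. $\{x_i,x_{i+1},x_{i+2}\}\notin\mathcal{B}$ for all $1\le i\le v-2$.
   Context: A partial Steiner triple system of order $v$, PSTS$(v)$, is a pair $(X,\mathcal{B})$ where $X$ is a set of $v$ points and $\mathcal{B}$ is a set of 3-subsets of $X$ (blocks) such that every pair of distinct points lies in at most one block. A sequencing of $X$ is an ordering $[x_1\,x_2\,\cdots\,x_v]$ of all points of $X$, each appearing exactly once. It is $3$-good if no three consecutive points form a block. *)

From mathcomp Require Import all_boot.
Set Implicit Arguments. Unset Strict Implicit. Unset Printing Implicit Defensive.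

(* A partial Steiner triple system on the point set 'I_v (= {1..v} shifted to {0..v-1}):
   every block is a 3-subset, and every pair of distinct points lies in at most one block. *)
Definition is_PSTS (v : nat) (B : {set {set 'I_v}}) : Prop :=
  (forall b, b \in B -> #|b| = 3) /\
  (forall x y : 'I_v, x != y ->
     forall b1 b2, b1 \in B -> b2 \in B ->
       x \in b1 -> y \in b1 -> x \in b2 -> y \in b2 -> b1 = b2).

Definition is_sequencing (v : nat) (s : seq 'I_v) : Prop :=
  uniq s /\ size s = v.

Definition three_good (v : nat) (B : {set {set 'I_v}}) (s : seq 'I_v) : Prop :=
  forall (x0 : 'I_v) (i : nat), i + 2 < size s ->
    [set nth x0 s i; nth x0 s i.+1; nth x0 s i.+2] \notin B.

From mathcomp Require Import all_boot.
Set Implicit Arguments. Unset Strict Implicit. Unset Printing Implicit Defensive.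

(* Build the sequencing greedily from the left.  Two blocks share at most one
   point, so after [a, b] at most one point [x] makes [{a, b, x}] a block, and
   the choice of the next point is free as long as two points remain.  The
   danger is the end: once at most three points are left, the set of the last
   three points of every completion is fixed, so it must not be a block.
   Maintaining this costs at most one more forbidden point, and only when four
   points are left: two distinct 3-subsets of a 4-set share two points, so at
   most one of them is a block. *)

Lemma exists_notin_card (T : finType) (A S : {set T}) :
  #|A| < #|S| -> exists2 x, x \in S & x \notin A.
Proof.
move=> lt_AS; apply/subsetPn/negP=> /subset_leq_card.
by rewrite leqNgt lt_AS.
Qed.

Section GoodSequencing.

Variables (v : nat) (B : {set {set 'I_v}}).
Hypothesis HB : is_PSTS B.

Lemma PSTS_block_eq (b1 b2 : {set 'I_v}) :
  b1 \in B -> b2 \in B -> 1 < #|b1 :&: b2| -> b1 = b2.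
Proof.
move=> b1B b2B /card_gt1P[x [y [/setIP[xb1 xb2] /setIP[yb1 yb2] neq_xy]]].
exact: HB.2 x y neq_xy b1 b2 b1B b2B xb1 yb1 xb2 yb2.
Qed.

Lemma PSTS_block_uniq (a b c : 'I_v) : [set a; b; c] \in B -> uniq [:: a; b; c].
Proof.
move=> /HB.1 card3; apply/card_uniqP.
rewrite -cardsE (_ : [set:: _] = [set a; b; c]) ?card3 //.
by apply/setP=> w; rewrite !inE orbA.
Qed.

Lemma third_point_unique (a b x y : 'I_v) :
  [set a; b; x] \in B -> [set a; b; y] \in B -> x = y.
Proof.
move=> abxB abyB; have := PSTS_block_uniq abxB.
rewrite /= !inE negb_or -andbA => /and4P[neq_ab neq_ax neq_bx _].
have: x \in [set a; b; y].
  rewrite -(PSTS_block_eq abxB abyB) ?inE ?eqxx ?orbT //.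
  by apply/card_gt1P; exists a, b; rewrite !inE !eqxx ?orbT.
by rewrite !inE eq_sym (negbTE neq_ax) eq_sym (negbTE neq_bx) => /eqP.
Qed.

Lemma card_third_points_le1 (a b : 'I_v) : #|[set x | [set a; b; x] \in B]| <= 1.
Proof.
apply/card_le1_eqP=> x y; rewrite !inE => abxB abyB.
exact: third_point_unique abyB abxB.
Qed.

Lemma card_block_complements_le1 (S : {set 'I_v}) :
  #|S| = 4 -> #|[set x in S | S :\ x \in B]| <= 1.
Proof.
move=> card4; apply/card_le1_eqP=> x y.
rewrite !inE => /andP[xS SxB] /andP[yS SyB].
apply/eqP; apply: contraTT (yS) => neq_yx.
have ySx : y \in S :\ x by rewrite !inE neq_yx.
have card_Sxy : #|S :\ x :\ y| = 2.
  by move: card4; rewrite (cardsD1 x S) xS (cardsD1 y (S :\ x)) ySx => -[].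
have Sxy : (S :\ x) :&: (S :\ y) = S :\ x :\ y.
  apply/setP=> w; rewrite !inE.
  by case: (w == x); case: (w == y); case: (w \in S).
have := ySx; rewrite (PSTS_block_eq SxB SyB) ?Sxy ?card_Sxy //.
by rewrite !inE eqxx.
Qed.

(* For [#|S| <= 3], the three sets below are the set of the last three points
   of every sequence [a, b] followed by an ordering of [S]. *)
Definition tail_ok (a b : 'I_v) (S : {set 'I_v}) : Prop :=
  [/\ #|S| = 1 -> a |: (b |: S) \notin B,
      #|S| = 2 -> b |: S \notin B &
      #|S| = 3 -> S \notin B].

Lemma tail_ok_setD1 (a b x : 'I_v) (S : {set 'I_v}) :
  x \in S -> #|S| != 4 -> tail_ok a b S -> tail_ok b x (S :\ x).
Proof.
move=> xS neq_S4 [_ ok2 ok3]; have := cardsD1 x S; rewrite xS add1n => cardS.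
split; rewrite ?setD1K //; move=> cardSx; rewrite cardSx in cardS.
- exact: ok2.
- exact: ok3.
- by rewrite cardS in neq_S4.
Qed.

Lemma tail_ok_extend (a b : 'I_v) (S : {set 'I_v}) :
  0 < #|S| -> tail_ok a b S ->
  exists2 x, x \in S & [set a; b; x] \notin B /\ tail_ok b x (S :\ x).
Proof.
move=> S_gt0 ok; have [ok1 _ _] := ok.
have [/eqP/cards1P[x defS] | neq_S1] := eqVneq #|S| 1.
  exists x; first by rewrite defS set11.
  split; last by apply: tail_ok_setD1 ok; rewrite defS ?cards1 ?set11.
  by move: ok1; rewrite defS cards1 setUA; apply.
set third := [set x | [set a; b; x] \in B].
have [card4 | neq_S4] := eqVneq #|S| 4.
  set bad := third :|: [set x in S | S :\ x \in B].
  have [|x xS] := exists_notin_card (A := bad) (S := S).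
    apply: leq_ltn_trans (leq_card_setU _ _).1 _.
    have le_compl := card_block_complements_le1 card4.
    have := leq_add (card_third_points_le1 a b) le_compl.
    by move/leq_ltn_trans; apply; rewrite card4.
  rewrite !inE xS negb_or /= => /andP[abxB SxB].
  have cardSx : #|S :\ x| = 3 by move: card4; rewrite (cardsD1 x S) xS => -[].
  by exists x => //; split=> //; split; rewrite cardSx.
have [|x xS] := exists_notin_card (A := third) (S := S).
  apply: leq_ltn_trans (card_third_points_le1 a b) _.
  by rewrite ltn_neqAle eq_sym neq_S1 S_gt0.
by rewrite inE => abxB; exists x => //; split=> //; apply: tail_ok_setD1 ok.
Qed.

Lemma three_good_cons (a b c : 'I_v) (t : seq 'I_v) :
  [set a; b; c] \notin B -> three_good B [:: b, c & t] ->
  three_good B [:: a, b, c & t].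
Proof. by move=> abcB good x0 [|i] lt_i //=; apply: good. Qed.

Lemma three_good_behead (x : 'I_v) (s : seq 'I_v) :
  three_good B (x :: s) -> three_good B s.
Proof. by move=> good x0 i lt_i; apply: (good x0 i.+1). Qed.

Lemma tail_ok_completion (a b : 'I_v) (S : {set 'I_v}) : tail_ok a b S ->
  exists t, [/\ uniq t, [set:: t] = S & three_good B [:: a, b & t]].
Proof.
move: {2}#|S| (erefl #|S|) => n; elim: n a b S => [|n IH] a b S cardS ok.
  exists [::]; split=> //.
    by rewrite (cards0_eq cardS); apply/setP=> w; rewrite !inE.
  by move=> x0 i; rewrite ltnNge leq_addl.
have [|x xS [abxB okx]] := tail_ok_extend (S := S) _ ok; first by rewrite cardS.
have [|t [uniq_t tS good]] := IH b x (S :\ x) _ okx.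
  by move: cardS; rewrite (cardsD1 x S) xS => -[].
exists (x :: t); split; last exact: three_good_cons.
- by rewrite /= uniq_t andbT; move: (setD11 x S); rewrite -tS inE => ->.
- by rewrite set_cons tS setD1K.
Qed.

End GoodSequencing.

Theorem theorem2 (v : nat) (B : {set {set 'I_v}}) :
  3 < v -> is_PSTS B ->
  exists s : seq 'I_v, is_sequencing s /\ three_good B s.
Proof.
move=> v_gt3 HB; pose a := Ordinal (ltnW (ltnW (ltnW v_gt3))).
(* [{a, a, x}] is never a block, so the dummy prefix [a, a] constrains nothing. *)
have ok : tail_ok B a a [set: 'I_v].
  by split; rewrite cardsT card_ord => eq_v; exfalso; have := v_gt3; rewrite eq_v.
have [t [uniq_t tT good]] := tail_ok_completion HB ok.
exists t; split; last exact: three_good_behead (three_good_behead good).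
split=> //; rewrite -(card_uniqP uniq_t) -cardsE tT.
by rewrite cardsT card_ord.
Qed.
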